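(* Let $a_n$, $s$ and $c$ be any integers and let $n$ be a positive integer. Then \[ \sum_{a_{n-1}=c}^{a_n}\sum_{a_{n-2}=c}^{a_{n-1}}\cdots\sum_{a_0=c}^{a_1}(-1)^{a_0}F_{3a_0+s}=(-1)^{a_n}\frac{F_{n+3a_n+s}}{2^n}+(-1)^c\sum_{j=0}^{n-1}\frac{F_{n-j+3(c-1)+s}}{2^{n-j}}\binom{a_n+j-c}{j}, \] and \[ \sum_{a_{n-1}=c}^{a_n}\sum_{a_{n-2}=c}^{a_{n-1}}\cdots\sum_{a_0=c}^{a_1}(-1)^{a_0}L_{3a_0+s}=(-1)^{a_n}\frac{L_{n+3a_n+s}}{2^n}+(-1)^c\sum_{j=0}^{n-1}\frac{L_{n-j+3(c-1)+s}}{2^{n-j}}\binom{a_n+j-c}{j}. \]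
   Context: $F_j$ and $L_j$ are the Fibonacci and Lucas numbers: $F_0=0,F_1=1$, $L_0=2,L_1=1$, both satisfying $X_j=X_{j-1}+X_{j-2}$, extended to all integer indices via the recurrence. For integers $c,m$ and a function $f$ on the integers, $\sum_{k=c}^m f(k)$ denotes the usual sum if $m\ge c$, equals $0$ if $m=c-1$, and equals $-\sum_{k=m+1}^{c-1}f(k)$ if $m\le c-2$. The nested sum $\sum_{a_{n-1}=c}^{a_n}\cdots\sum_{a_0=c}^{a_1}g(a_0)$ is the iterated sum with $n$ summation signs: innermost over $a_0$ from $c$ to $a_1$, then $a_1$ from $c$ to $a_2$, ..., outermost $a_{n-1}$ from $c$ to $a_n$. For an integer $j\ge0$ and any number $y$, $\binom{y}{j}=y(y-1)\cdots(y-j+1)/j!$. *)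

From mathcomp Require Import all_boot all_order all_algebra.
Set Implicit Arguments. Unset Strict Implicit. Unset Printing Implicit Defensive.
Import Order.TTheory GRing.Theory Num.Theory.
Local Open Scope ring_scope.

(* Forward iteration of X_j = X_{j-1} + X_{j-2}: fwd n = (X_n, X_{n+1}). *)
Fixpoint rec_fwd (x0 x1 : int) (n : nat) : int * int :=
  match n with
  | O => (x0, x1)
  | S k => let p := rec_fwd x0 x1 k in (p.2, p.1 + p.2)
  end.

(* Backward iteration X_{j-2} = X_j - X_{j-1}: bwd n = (X_{-n}, X_{-n+1}). *)
Fixpoint rec_bwd (x0 x1 : int) (n : nat) : int * int :=
  match n with
  | O => (x0, x1)
  | S k => let p := rec_bwd x0 x1 k in (p.2 - p.1, p.1)
  end.

Definition recZ (x0 x1 : int) (z : int) : int :=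
  match z with
  | Posz n => (rec_fwd x0 x1 n).1
  | Negz n => (rec_bwd x0 x1 n.+1).1   (* Negz n = -(n+1) *)
  end.

Definition Fib (z : int) : int := recZ 0 1 z.
Definition Luc (z : int) : int := recZ 2 1 z.

Definition gsum (c m : int) (f : int -> rat) : rat :=
  if c <= m + 1 then \sum_(0 <= i < absz (m - c + 1)%R) f (c + i%:Z)
  else - \sum_(0 <= i < absz (c - 1 - m)%R) f (m + 1 + i%:Z).

(* nested n c g x = sum_{a_{n-1}=c}^{x} ... sum_{a_0=c}^{a_1} g(a_0), n signs. *)
Fixpoint nested (n : nat) (c : int) (g : int -> rat) : int -> rat :=
  match n with
  | O => g
  | S k => fun x => gsum c x (nested k c g)
  end.

Definition gbinom (y : rat) (j : nat) : rat :=
  (\prod_(i < j) (y - i%:R)) / (j`!)%:R.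

From mathcomp Require Import all_boot all_order all_algebra.
From mathcomp Require Import zify ring.
Import Order.TTheory GRing.Theory Num.Theory.
Local Open Scope ring_scope.

(* Write R_n(x) for the right-hand side with a_n = x, for any sequence X obeying
   the Fibonacci recurrence on Z. Pascal's rule for the binomial terms and the
   identity X_{k+1} + X_{k-2} = 2 X_k for the leading term give
   R_{n+1}(x) - R_{n+1}(x-1) = R_n(x); moreover R_{n+1}(c-1) = 0 and R_0 is the
   summand. So, by induction on n, the outermost sum telescopes to
   R_{n+1}(a_n) - R_{n+1}(c-1) = R_{n+1}(a_n); this holds for n = 0 as well. *)

Lemma recZSS (x0 x1 z : int) :
  recZ x0 x1 (z + 2) = recZ x0 x1 (z + 1) + recZ x0 x1 z.
Proof.
case: z => [n|[|[|m]]].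
- have -> : Posz n + 2 = Posz n.+2 by lia.
  have -> : Posz n + 1 = Posz n.+1 by lia.
  by rewrite /= addrC.
- by rewrite /=; ring.
- by rewrite /=; ring.
- have -> : Negz m.+2 + 2 = Negz m by rewrite !NegzE; lia.
  have -> : Negz m.+2 + 1 = Negz m.+1 by rewrite !NegzE; lia.
  by rewrite /=; ring.
Qed.

Lemma gsum_telescope (c x : int) (f D : int -> rat) :
  (forall a, f a = D a - D (a - 1)) -> gsum c x f = D x - D (c - 1).
Proof.
move=> fD; rewrite /gsum; case: ifP => [c_le_xS|c_gt_xS].
  rewrite (telescope_sumr_eq (fun k : nat => D (c + k%:Z - 1))) => // [|k _].
    by rewrite addr0; congr (D _ - _); lia.
  by rewrite fD; congr (D _ - D _); lia.
rewrite (telescope_sumr_eq (fun k : nat => D (x + k%:Z))) => // [|k _].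
  by rewrite addr0 opprB; congr (_ - D _); lia.
by rewrite fD; congr (D _ - D _); lia.
Qed.

Lemma gbinom0 (y : rat) : gbinom y 0 = 1.
Proof. by rewrite /gbinom big_ord0 divr1. Qed.

Lemma gbinomS (y : rat) (j : nat) :
  gbinom (y + 1) j.+1 = gbinom y j.+1 + gbinom y j.
Proof.
rewrite /gbinom big_ord_recl big_ord_recr /= factS natrM.
under eq_bigr => i _ do rewrite /bump /= add1n -addn1 natrD opprD addrACA subrr addr0.
have fact_neq0 : (j`!)%:R != 0 :> rat by rewrite pnatr_eq0 -lt0n fact_gt0.
have jS_neq0 : j.+1%:R != 0 :> rat by rewrite pnatr_eq0.
rewrite -addn1 natrD in jS_neq0 *.
by field; rewrite fact_neq0 jS_neq0.
Qed.

Lemma gbinom_small (k j : nat) : (k < j)%N -> gbinom k%:R j = 0.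
Proof.
move=> lt_kj; rewrite /gbinom (bigD1 (Ordinal lt_kj)) //=.
by rewrite subrr !mul0r.
Qed.

Lemma expN1z_sub1 (x : int) : (-1 : rat) ^ (x - 1) = - (-1) ^ x.
Proof.
rewrite expfzDr ?oppr_eq0 ?oner_eq0 //.
have -> : (-1 : rat) ^ (-1 : int) = -1 by rewrite /exprz /= expr1 invrN1.
by rewrite mulrN1.
Qed.

Section NestedSumClosedForm.

Variable X : int -> int.
Hypothesis XSS : forall z, X (z + 2) = X (z + 1) + X z.
Variables s c : int.

Lemma X_add_shift3 (k : int) : X (k + 1) + X (k - 2) = 2 * X k.
Proof.
have := XSS (k - 1); have := XSS (k - 2).
have -> : k - 1 + 2 = k + 1 by lia.
have -> : k - 1 + 1 = k by lia.
have -> : k - 2 + 2 = k by lia.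
have -> : k - 2 + 1 = k - 1 by lia.
lia.
Qed.

Definition lead_term (n : nat) (x : int) : rat :=
  (-1) ^ x * (X (n%:Z + 3 * x + s))%:~R / 2 ^+ n.

Definition binom_term (n : nat) (x : int) (j : nat) : rat :=
  (X ((n - j)%:Z + 3 * (c - 1) + s))%:~R / 2 ^+ (n - j)
  * gbinom (x + j%:Z - c)%:~R j.

Definition closed_form (n : nat) (x : int) : rat :=
  lead_term n x + (-1) ^ c * \sum_(j < n) binom_term n x j.

Lemma lead_term_diff n x : lead_term n.+1 x - lead_term n.+1 (x - 1) = lead_term n x.
Proof.
rewrite /lead_term expN1z_sub1 exprS.
set k := n%:Z + 3 * x + s.
have -> : n.+1%:Z + 3 * x + s = k + 1 by rewrite /k; lia.
have -> : n.+1%:Z + 3 * (x - 1) + s = k - 2 by rewrite /k; lia.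
have := congr1 (intr : int -> rat) (X_add_shift3 k).
rewrite intrD intrM => /(canRL (addrK _)) ->.
have pow2_neq0 : (2 : rat) ^+ n != 0 by rewrite expf_neq0.
by field; rewrite pow2_neq0.
Qed.

Lemma binom_term0 n x :
  binom_term n x 0 = (X (n%:Z + 3 * (c - 1) + s))%:~R / 2 ^+ n.
Proof. by rewrite /binom_term gbinom0 subn0 mulr1. Qed.

Lemma binom_term_diff n x j :
  binom_term n.+1 x j.+1 - binom_term n.+1 (x - 1) j.+1 = binom_term n x j.
Proof.
rewrite /binom_term subSS.
have -> : (x + j.+1%:Z - c)%:~R = (x - 1 + j.+1%:Z - c)%:~R + 1 :> rat.
  by rewrite -[1 : rat]/(1%:~R) -intrD; congr intmul; lia.
rewrite gbinomS (_ : x - 1 + j.+1%:Z - c = x + j%:Z - c); last by lia.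
ring.
Qed.

Lemma closed_form_diff n x :
  closed_form n.+1 x - closed_form n.+1 (x - 1) = closed_form n x.
Proof.
rewrite /closed_form !big_ord_recl !binom_term0 -(lead_term_diff n x).
have -> : \sum_(j < n) binom_term n x j =
    \sum_(j < n) binom_term n.+1 x (bump 0 j)
  - \sum_(j < n) binom_term n.+1 (x - 1) (bump 0 j).
  by rewrite -sumrB; apply: eq_bigr => j _; rewrite /bump add1n binom_term_diff.
ring.
Qed.

Lemma closed_form_c_sub1 n : closed_form n.+1 (c - 1) = 0.
Proof.
rewrite /closed_form big_ord_recl big1 => [|j _]; last first.
  rewrite /binom_term /= /bump add1n.
  rewrite (_ : c - 1 + j.+1%:Z - c = j%:Z); last by lia.
  by rewrite pmulrn gbinom_small ?mulr0.
rewrite binom_term0 /lead_term expN1z_sub1.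
ring.
Qed.

Lemma closed_form0 x : closed_form 0 x = (-1) ^ x * (X (3 * x + s))%:~R.
Proof. by rewrite /closed_form /lead_term big_ord0 expr0 divr1 mulr0 addr0 add0r. Qed.

Lemma nested_closed_form n x :
  nested n c (fun a => (-1 : rat) ^ a * (X (3 * a + s))%:~R) x = closed_form n x.
Proof.
elim: n x => [|n IHn] x /=; first by rewrite closed_form0.
rewrite (@gsum_telescope c x _ (closed_form n.+1)) => [|a].
  by rewrite closed_form_c_sub1 subr0.
by rewrite IHn closed_form_diff.
Qed.

End NestedSumClosedForm.

Theorem theorem2 (an s c : int) (n : nat) (hn : (0 < n)%N) :
  nested n c (fun a => (-1 : rat) ^ a * (Fib (3 * a + s))%:~R) an =
    (-1 : rat) ^ an * (Fib (n%:Z + 3 * an + s))%:~R / 2 ^+ n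
    + (-1 : rat) ^ c * \sum_(j < n)
        (Fib ((n - j)%:Z + 3 * (c - 1) + s))%:~R / 2 ^+ (n - j)
        * gbinom (an + j%:Z - c)%:~R j
  /\
  nested n c (fun a => (-1 : rat) ^ a * (Luc (3 * a + s))%:~R) an =
    (-1 : rat) ^ an * (Luc (n%:Z + 3 * an + s))%:~R / 2 ^+ n
    + (-1 : rat) ^ c * \sum_(j < n)
        (Luc ((n - j)%:Z + 3 * (c - 1) + s))%:~R / 2 ^+ (n - j)
        * gbinom (an + j%:Z - c)%:~R j.
Proof.
split.
- exact: (nested_closed_form Fib (recZSS 0 1) s c n an).
- exact: (nested_closed_form Luc (recZSS 2 1) s c n an).
Qed.
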